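(* Fix $n\in\mathbb{N}$ and $b\in\mathbb{R}^n\setminus\{0\}$. Let $\mathcal{N}\subset\mathbb{R}^{n\times n}$ be the set of real matrices $A$ such that $A^2$ has $n$ distinct eigenvalues, and let $\mathcal{O}\subset\mathbb{R}^{n\times n}$ be the set of real matrices $A$ such that $b^T\eta\neq 0$ for every left eigenvector $\eta\in\mathbb{C}^n$ of $A$. Then $GL(n)\cap\mathcal{N}\cap\mathcal{O}$ is open and dense in $\mathbb{R}^{n\times n}$.
   Context: $GL(n)$ denotes the set of invertible real $n\times n$ matrices. A left eigenvector of $A$ is a nonzero $\eta\in\mathbb{C}^n$ with $\eta^TA=\lambda\eta^T$ for some $\lambda\in\mathbb{C}$; $b^T\eta$ denotes the (non-conjugated) bilinear product $\sum_j b_j\eta_j$. The topology on $\mathbb{R}^{n\times n}$ is the standard (norm) topology. *)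

From HB Require Import structures.
From mathcomp Require Import all_boot all_algebra.
From mathcomp Require Import all_classical all_reals all_analysis.
From mathcomp Require Import complex.
Import GRing.Theory Num.Theory numFieldNormedType.Exports.
Local Open Scope ring_scope.
Local Open Scope complex_scope.

Definition toC {R : rcfType} {m k : nat} (A : 'M[R]_(m, k)) : 'M[R[i]]_(m, k) :=
  map_mx (fun x : R => x%:C) A.

Definition sq_distinct_eig {R : rcfType} {n : nat} (A : 'M[R]_n) : Prop :=
  exists s : seq R[i],
    [/\ size s = n, uniq s & forall z, z \in s -> eigenvalue (toC (A *m A)) z].

(* eta (a row vector, i.e. eta^T) is a left eigenvector of A:
   eta <> 0 and eta^T A = lambda eta^T for some complex lambda. *)
Definition left_eigenvector {R : rcfType} {n : nat} (A : 'M[R]_n)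
  (eta : 'rV[R[i]]_n) : Prop :=
  eta != 0 /\ exists lambda : R[i], eta *m toC A = lambda *: eta.

(* O: b^T eta <> 0 (non-conjugated bilinear product) for every left eigenvector. *)
Definition obs_cond {R : rcfType} {n : nat} (b : 'cV[R]_n) (A : 'M[R]_n) : Prop :=
  forall eta : 'rV[R[i]]_n, left_eigenvector A eta ->
    \sum_(j < n) (b j 0)%:C * eta 0 j != 0.

Definition good_set {R : rcfType} {n : nat} (b : 'cV[R]_n) : set 'M[R]_n :=
  [set A | A \in unitmx /\ sq_distinct_eig A /\ obs_cond b A].

From HB Require Import structures.
From mathcomp Require Import all_boot all_algebra all_field.
From mathcomp Require Import all_classical all_reals all_analysis.
From mathcomp Require Import complex.
From mathcomp Require polyorder.
Import GRing.Theory Num.Theory numFieldNormedType.Exports.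
Local Open Scope ring_scope.

(* Each of the three conditions is the non-vanishing of a polynomial function
   of the entries of A: det A for GL(n); the resultant of the characteristic
   polynomial of A^2 and its derivative for N (distinct eigenvalues means a
   separable characteristic polynomial); and, by the Hautus test, the
   determinant of the Krylov matrix [b, Ab, ..., A^(n-1) b] for O.  The
   non-vanishing set of a continuous function is open, and that of a
   polynomial function which is not identically zero is dense, since on every
   line it restricts to a non-zero polynomial, whose roots are isolated.
   Explicit witnesses are diag(1, ..., n) for N and a conjugate of the shift
   matrix for O; a finite intersection of open dense sets is open dense. *)

(* [Sylvester_mx p q] with the degrees of [p] and [q] passed explicitly, so
   that its type does not depend on [p] and [q]. *)
Definition sylvester_mx {R : nzRingType} (a b : nat) (p q : {poly R}) :
    'M[R]_(b + a) :=
  \matrix_(i, j) match fintype.split i with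
                 | inl k => p`_(j - k) *+ (k <= j)%N
                 | inr k => q`_(j - k) *+ (k <= j)%N end.

Lemma resultantE (R : nzRingType) (p q : {poly R}) :
  resultant p q = \det (sylvester_mx (size p).-1 (size q).-1 p q).
Proof.
by rewrite /resultant; congr (\det _); apply/matrixP => i j; rewrite Sylvester_mxE mxE.
Qed.

Section PolynomialMap.
Context {R : realType} {V : normedModType R}.

Definition polymap (f : V -> R) : Prop :=
  continuous f /\
  forall x d : V, exists p : {poly R}, forall t, f (x + t *: d) = p.[t].

Lemma polymap_cst c : polymap (fun=> c).
Proof.
split; first exact: cst_continuous.
by move=> x d; exists c%:P => t; rewrite hornerC.
Qed.

Lemma polymapD f g : polymap f -> polymap g -> polymap (fun x => f x + g x).
Proof.
move=> [cf lf] [cg lg]; split.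
  by move=> x; apply: continuousD; [exact: cf | exact: cg].
move=> x d; have [p hp] := lf x d; have [q hq] := lg x d.
by exists (p + q) => t; rewrite hp hq hornerD.
Qed.

Lemma polymapM f g : polymap f -> polymap g -> polymap (fun x => f x * g x).
Proof.
move=> [cf lf] [cg lg]; split.
  by move=> x; apply: continuousM; [exact: cf | exact: cg].
move=> x d; have [p hp] := lf x d; have [q hq] := lg x d.
by exists (p * q) => t; rewrite hp hq hornerM.
Qed.

Lemma polymap_sum (I : Type) (r : seq I) (P : pred I) (F : V -> I -> R) :
  (forall i, polymap (F ^~ i)) -> polymap (fun x => \sum_(i <- r | P i) F x i).
Proof.
move=> hF; elim: r => [|i r IHr].
  by under eq_fun do rewrite big_nil; exact: polymap_cst.
under eq_fun do rewrite big_cons; case: (P i) => //; exact: polymapD.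
Qed.

Lemma polymap_prod (I : Type) (r : seq I) (P : pred I) (F : V -> I -> R) :
  (forall i, polymap (F ^~ i)) -> polymap (fun x => \prod_(i <- r | P i) F x i).
Proof.
move=> hF; elim: r => [|i r IHr].
  by under eq_fun do rewrite big_nil; exact: polymap_cst.
under eq_fun do rewrite big_cons; case: (P i) => //; exact: polymapM.
Qed.

Definition polymap_mx {p q} (F : V -> 'M[R]_(p, q)) : Prop :=
  forall i j, polymap (fun x => F x i j).

Lemma polymap_mx_cst p q (B : 'M[R]_(p, q)) : polymap_mx (fun=> B).
Proof. by move=> i j; exact: polymap_cst. Qed.

Lemma polymap_mxM p q r (F : V -> 'M[R]_(p, q)) (G : V -> 'M[R]_(q, r)) :
  polymap_mx F -> polymap_mx G -> polymap_mx (fun x => F x *m G x).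
Proof.
move=> hF hG i j; under eq_fun do rewrite mxE.
by apply: polymap_sum => k; exact: polymapM.
Qed.

Lemma polymap_det k (F : V -> 'M[R]_k) :
  polymap_mx F -> polymap (fun x => \det (F x)).
Proof.
move=> hF; apply: polymap_sum => s; apply: polymapM; first exact: polymap_cst.
by apply: polymap_prod => i; exact: hF.
Qed.

Definition polymap_poly (F : V -> {poly R}) : Prop :=
  forall k, polymap (fun x => (F x)`_k).

Lemma polymap_poly_cst p : polymap_poly (fun=> p).
Proof. by move=> k; exact: polymap_cst. Qed.

Lemma polymap_polyC f : polymap f -> polymap_poly (fun x => (f x)%:P).
Proof.
move=> hf k; under eq_fun do rewrite coefC.
by case: (k == 0); [exact: hf | exact: polymap_cst].
Qed.

Lemma polymap_polyD F G :
  polymap_poly F -> polymap_poly G -> polymap_poly (fun x => F x + G x).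
Proof. by move=> hF hG k; under eq_fun do rewrite coefD; exact: polymapD. Qed.

Lemma polymap_polyM F G :
  polymap_poly F -> polymap_poly G -> polymap_poly (fun x => F x * G x).
Proof.
move=> hF hG k; under eq_fun do rewrite coefM.
by apply: polymap_sum => j; exact: polymapM.
Qed.

Lemma polymap_polyN F : polymap_poly F -> polymap_poly (fun x => - F x).
Proof.
move=> hF k; under eq_fun do rewrite coefN -mulN1r.
by apply: polymapM => //; exact: polymap_cst.
Qed.

Lemma polymap_poly_deriv F : polymap_poly F -> polymap_poly (fun x => (F x)^`()).
Proof.
move=> hF k; under eq_fun do rewrite coef_deriv -mulr_natr.
by apply: polymapM => //; exact: polymap_cst.
Qed.

Lemma polymap_poly_sum (I : Type) (r : seq I) (P : pred I) (F : V -> I -> {poly R}) :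
  (forall i, polymap_poly (F ^~ i)) ->
  polymap_poly (fun x => \sum_(i <- r | P i) F x i).
Proof.
move=> hF; elim: r => [|i r IHr].
  by under eq_fun do rewrite big_nil; exact: polymap_poly_cst.
under eq_fun do rewrite big_cons; case: (P i) => //; exact: polymap_polyD.
Qed.

Lemma polymap_poly_prod (I : Type) (r : seq I) (P : pred I) (F : V -> I -> {poly R}) :
  (forall i, polymap_poly (F ^~ i)) ->
  polymap_poly (fun x => \prod_(i <- r | P i) F x i).
Proof.
move=> hF; elim: r => [|i r IHr].
  by under eq_fun do rewrite big_nil; exact: polymap_poly_cst.
under eq_fun do rewrite big_cons; case: (P i) => //; exact: polymap_polyM.
Qed.

Lemma polymap_poly_det k (F : V -> 'M[{poly R}]_k) :
  (forall i j, polymap_poly (fun x => F x i j)) ->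
  polymap_poly (fun x => \det (F x)).
Proof.
move=> hF; apply: polymap_poly_sum => s.
apply: polymap_polyM; first exact: polymap_poly_cst.
by apply: polymap_poly_prod => i; exact: hF.
Qed.

Lemma polymap_char_poly k (F : V -> 'M[R]_k) :
  polymap_mx F -> polymap_poly (fun x => char_poly (F x)).
Proof.
move=> hF; apply: polymap_poly_det => i j; under eq_fun do rewrite !mxE.
apply: polymap_polyD; first exact: polymap_poly_cst.
by apply/polymap_polyN/polymap_polyC; exact: hF.
Qed.

Lemma polymap_resultant F G a b : polymap_poly F -> polymap_poly G ->
  (forall x, (size (F x)).-1 = a) -> (forall x, (size (G x)).-1 = b) ->
  polymap (fun x => resultant (F x) (G x)).
Proof.
move=> hF hG sF sG; under eq_fun => x do rewrite resultantE sF sG.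
apply: polymap_det => i j; under eq_fun do rewrite mxE.
case: (fintype.split i) => k; under eq_fun do rewrite -mulr_natr;
  by apply: polymapM => //; exact: polymap_cst.
Qed.

Local Open Scope classical_set_scope.

Lemma polymap_open_neq0 f : polymap f -> open [set x | f x != 0].
Proof. by move=> [cf _]; exact: (continuousP f).1 cf _ (@open_neq R 0). Qed.

(* Along the segment from a point of O to a non-zero of f, f is a non-zero
   polynomial in t; its root at t = 0 is isolated, so f does not vanish at
   some small t <> 0 for which the point still lies in O. *)
Lemma polymap_dense_neq0 f : polymap f -> (exists x1, f x1 != 0) ->
  dense [set x | f x != 0].
Proof.
move=> [_ lf] [x1 fx1] O [x0 Ox0] oO.
have [p hp] := lf x0 (x1 - x0).
have p1 : p.[1] != 0 by rewrite -hp scale1r addrC subrK.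
have pn0 : p != 0 by apply: contraNneq p1 => ->; rewrite horner0.
have [m [g /implyP/(_ pn0) g0 pE]] := multiplicity_XsubC p 0.
have nearO : \forall t \near (0 : R), O (x0 + t *: (x1 - x0)).
  have cl : {for 0, continuous (fun t : R => x0 + t *: (x1 - x0))}.
    apply: continuousD; first exact: cst_continuous.
    by apply: continuousZr_tmp => t; exact: cvg_id.
  by apply: cl; rewrite /= scale0r addr0; apply: open_nbhs_nbhs.
have nearg : \forall t \near (0 : R), g.[t] != 0.
  apply: (@continuous_horner R g 0 [set t | t != 0]).
  by apply: open_nbhs_nbhs; split; [exact: open_neq | exact: g0].
have : \forall t \near (0 : R)^', [/\ O (x0 + t *: (x1 - x0)), g.[t] != 0 & t != 0].
  near=> t; split.
  - by near: t; apply: nbhs_dnbhs.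
  - by near: t; apply: nbhs_dnbhs.
  - by near: t; exact: nbhs_dnbhs_neq.
move=> /filter_ex [t [Ot gt t0]]; exists (x0 + t *: (x1 - x0)); split => //=.
by rewrite hp pE hornerM horner_exp hornerXsubC subr0 mulf_neq0 ?expf_neq0.
Unshelve. all: by end_near.
Qed.

Lemma polymap_open_dense_neq0 f : polymap f -> (exists x1, f x1 != 0) ->
  open [set x | f x != 0] /\ dense [set x | f x != 0].
Proof.
by move=> pf nz; split; [exact: polymap_open_neq0 | exact: polymap_dense_neq0].
Qed.

End PolynomialMap.

Section MatrixPolymap.
Variable R : realType.

Lemma polymap_mx_id m k : polymap_mx (fun A : 'M[R]_(m, k) => A).
Proof.
move=> i j; split; first exact: coord_continuous.
move=> A D; exists ((A i j)%:P + (D i j)%:P * 'X) => t.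
by rewrite !mxE hornerD hornerC hornerMX hornerC mulrC.
Qed.

Lemma polymap_mx_exp m e : polymap_mx (fun A : 'M[R]_m => A ^+ e).
Proof.
elim: e => [|e IHe]; first by under eq_fun do rewrite expr0; exact: polymap_mx_cst.
under eq_fun do rewrite exprS -mulmxE.
by apply: polymap_mxM; [exact: polymap_mx_id | exact: IHe].
Qed.

End MatrixPolymap.

Lemma horner_mx_coefE (R : comNzRingType) n (A : 'M[R]_n.+1) (p : {poly R}) :
  horner_mx A p = \sum_(i < size p) p`_i *: A ^+ i.
Proof.
rewrite -{1}[p]coefK poly_def rmorph_sum; apply: eq_bigr => i _.
by rewrite -mul_polyC rmorphM /= horner_mx_C rmorphXn /= horner_mx_X -mulmxE
  mul_scalar_mx.
Qed.

Lemma mulmx_eigen_exp {R : comNzRingType} {n} {A : 'M[R]_n} {u : 'rV_n} {l} :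
  u *m A = l *: u -> forall k, u *m A ^+ k = l ^+ k *: u.
Proof.
move=> uA; elim=> [|k IHk]; first by rewrite expr0 mulmx1 scale1r.
by rewrite exprSr -mulmxE mulmxA IHk -scalemxAl uA scalerA -exprSr.
Qed.

Lemma stablemx_eigenvector {C : numClosedFieldType} {n} {A W : 'M[C]_n} :
  stablemx W A -> W != 0 ->
  exists u : 'rV_n, [/\ u != 0, (u <= W)%MS & exists l, u *m A = l *: u].
Proof.
move=> sWA W0; have rW : (0 < \rank W)%N by rewrite lt0n mxrank_eq0.
have [a /eigenvalueP [v va v0]] := eigenvalue_closed (restrictmx W A) rW.
have : stablemx v (restrictmx W A).
  by apply/eigenvectorP; exists a; apply/eigenspaceP.
rewrite stablemx_restrict // => /eigenvectorP [l /eigenspaceP ul].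
exists (v *m row_base W); split; last by exists l.
- by rewrite mulmx_free_eq0 ?row_base_free.
- by rewrite (submx_trans (submxMl _ _)) // eq_row_base.
Qed.

Section Krylov.
Variables (F : fieldType) (n : nat) (A : 'M[F]_n.+1) (b : 'cV[F]_n.+1).

Definition krylov_mx : 'M[F]_n.+1 := \matrix_(i, j) (A ^+ j *m b) i 0.

Lemma mulmx_krylov_mx (v : 'rV_n.+1) j :
  (v *m krylov_mx) 0 j = (v *m A ^+ j *m b) 0 0.
Proof. by rewrite -mulmxA !mxE; apply: eq_bigr => i _; rewrite mxE. Qed.

(* Cayley-Hamilton: every power of [A] is a combination of A^0, ..., A^n. *)
Lemma mulmx_krylov_mx_eq0 (v : 'rV_n.+1) :
  v *m krylov_mx = 0 -> forall k, v *m A ^+ k *m b = 0.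
Proof.
move=> vK k.
have vK_low i : (i < n.+1)%N -> v *m A ^+ i *m b = 0.
  move=> lti; apply/matrixP => x y; rewrite !ord1.
  by have := mulmx_krylov_mx v (Ordinal lti); rewrite vK /= !mxE => <-.
have cn0 : char_poly A != 0 by rewrite monic_neq0 // char_poly_monic.
have -> : A ^+ k = horner_mx A ('X^k %% char_poly A).
  rewrite -[in LHS](horner_mx_X A) -rmorphXn /= {1}(divp_eq 'X^k (char_poly A)).
  by rewrite rmorphD rmorphM /= Cayley_Hamilton mulr0 add0r.
rewrite horner_mx_coefE mulmx_sumr mulmx_suml big1 // => i _.
rewrite -scalemxAr -scalemxAl vK_low ?scaler0 //.
have := ltn_modp 'X^k (char_poly A); rewrite cn0 size_char_poly => lt_k.
exact: leq_trans (ltn_ord i) lt_k.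
Qed.

Lemma stablemx_kermx_krylov : stablemx (kermx krylov_mx) A.
Proof.
apply/sub_kermxP/row_matrixP => i; rewrite row0 2!row_mul.
have : row i (kermx krylov_mx) *m krylov_mx = 0 by rewrite -row_mul mulmx_ker row0.
move: (row i _) => w /mulmx_krylov_mx_eq0 wK.
by apply/rowP => j; rewrite mulmx_krylov_mx -(mulmxA w A) mulmxE -exprS wK !mxE.
Qed.

End Krylov.
Arguments krylov_mx {F n}.
Arguments mulmx_krylov_mx {F n}.
Arguments stablemx_kermx_krylov {F n}.

Lemma det_krylov_mx_neq0 (C : numClosedFieldType) n (A : 'M[C]_n.+1)
    (b : 'cV[C]_n.+1) :
  \det (krylov_mx A b) != 0 <->
  (forall eta : 'rV_n.+1, eta != 0 -> forall l, eta *m A = l *: eta ->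
     (eta *m b) 0 0 != 0).
Proof.
split=> [dK eta eta0 l etaA | H].
  apply: contra dK => /eqP etab0; apply/det0P; exists eta => //.
  apply/rowP => j; rewrite mulmx_krylov_mx (mulmx_eigen_exp etaA).
  by rewrite -scalemxAl mxE etab0 mulr0 mxE.
apply/negP => /det0P [v v0 vK].
have W0 : kermx (krylov_mx A b) != 0.
  by apply: contraNneq v0 => W0; rewrite -submx0 -W0; apply/sub_kermxP.
have [u [u0 uW [l uA]]] := stablemx_eigenvector (stablemx_kermx_krylov A b) W0.
have := H u u0 l uA; have := mulmx_krylov_mx A b u 0.
by rewrite (sub_kermxP uW) expr0 mulmx1 mxE => <-; rewrite eqxx.
Qed.

Lemma map_krylov_mx (F K : fieldType) (f : {rmorphism F -> K}) n
    (A : 'M[F]_n.+1) (b : 'cV[F]_n.+1) :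
  map_mx f (krylov_mx A b) = krylov_mx (map_mx f A) (map_mx f b).
Proof.
apply/matrixP => i j.
by rewrite [LHS]mxE [RHS]mxE /krylov_mx mxE -(rmorphXn (map_mx f)) -map_mxM [RHS]mxE.
Qed.

Definition shift_mx {R : nzRingType} n : 'M[R]_n := \matrix_(i, j) ((i : nat) == j.+1)%:R.

Lemma shift_mx_exp_delta (R : nzRingType) n (j : nat) (k : 'I_n.+1) :
  (shift_mx n.+1 ^+ j *m delta_mx 0 (0 : 'I_1)) k 0 = ((k : nat) == j)%:R :> R.
Proof.
elim: j k => [|j IHj] k; first by rewrite expr0 mul1mx mxE eqxx andbT.
rewrite exprS -mulmxE -mulmxA mxE; under eq_bigr do rewrite IHj mxE.
have [ltjn | lenj] := ltnP j n.+1.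
  rewrite (bigD1 (Ordinal ltjn)) //= eqxx mulr1 big1 ?addr0 // => l lj.
  by rewrite (_ : (l : nat) == j = false) ?mulr0 //; apply: contraNF lj => /eqP lj;
    apply/eqP/val_inj.
rewrite big1 => [|l _]; last by rewrite [_ == j]ltn_eqF ?mulr0 // (leq_trans (ltn_ord l)).
by rewrite [_ == j.+1]ltn_eqF // (leq_trans (ltn_ord k)) // leqW.
Qed.

(* Write b = c P e_0 with P invertible; for the shift S : e_j |-> e_(j+1),
   A = P S P^-1 gives A^j b = c P e_j, so the Krylov matrix is c P. *)
Lemma exists_det_krylov_mx_neq0 {F : fieldType} {n} {b : 'cV[F]_n.+1} :
  b != 0 -> exists A : 'M[F]_n.+1, \det (krylov_mx A b) != 0.
Proof.
move=> b0; have rb : \rank b^T = 1%N by rewrite rank_rV trmx_eq0 b0.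
have bT := mulmx_ebase b^T; rewrite rb in bT.
set c := col_ebase b^T in bT; set P := (row_ebase b^T)^T.
have PU : P \in unitmx by rewrite unitmx_tr row_ebase_unit.
have c0 : c 0 0 != 0.
  by have := col_ebase_unit b^T; rewrite unitmxE det_mx11 unitfE.
have bE : b = c 0 0 *: (P *m delta_mx 0 0).
  rewrite -[b]trmxK -bT !trmx_mul tr_pid_mx mulmxA [c^T]mx11_scalar mxE.
  by rewrite mul_mx_scalar; congr (_ *: (_ *m _)); apply/matrixP => i j;
    rewrite !mxE !ord1 /=; case: i => [[|i] ?].
exists (P *m shift_mx n.+1 *m invmx P).
have expE j : (P *m shift_mx n.+1 *m invmx P) ^+ j = P *m shift_mx n.+1 ^+ j *m invmx P.
  elim: j => [|j IHj]; first by rewrite !expr0 mulmx1 mulmxV.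
  by rewrite exprS IHj [in RHS]exprS -!mulmxE !mulmxA mulmxKV.
have -> : krylov_mx (P *m shift_mx n.+1 *m invmx P) b = c 0 0 *: P.
  apply/matrixP => i j; rewrite /krylov_mx [LHS]mxE expE bE -scalemxAr.
  have Sj : shift_mx n.+1 ^+ j *m delta_mx 0 0 = delta_mx j 0 :> 'cV[F]_n.+1.
    by apply/matrixP => k l; rewrite ord1 shift_mx_exp_delta mxE eqxx andbT.
  by rewrite mulmxA mulmxKV // -mulmxA Sj -colE !mxE.
by rewrite detZ mulf_neq0 ?expf_neq0 // -unitfE -unitmxE.
Qed.

Lemma separable_char_polyP (C : closedFieldType) n (B : 'M[C]_n) :
  separable_poly (char_poly B) <->
  exists s : seq C, [/\ size s = n, uniq s & forall z, z \in s -> eigenvalue B z].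
Proof.
have [rs] := closed_field_poly_normal (char_poly B).
rewrite (eqP (char_poly_monic B)) scale1r => Brs.
have size_rs : size rs = n.
  by have := size_char_poly B; rewrite Brs size_prod_XsubC => -[].
have eigE z : eigenvalue B z = (z \in rs).
  by rewrite eigenvalue_root_char Brs root_prod_XsubC.
rewrite Brs separable_prod_XsubC; split=> [uniq_rs | [s [size_s uniq_s sB]]].
  by exists rs; split=> // z; rewrite eigE.
have sub_s : {subset s <= rs} by move=> z /sB; rewrite eigE.
have [s_rs eq_s] := uniq_min_size uniq_s sub_s (eq_leq (etrans size_rs (esym size_s))).
by rewrite -(eq_uniq s_rs eq_s).
Qed.

(* Equals the discriminant of a monic [p] up to sign. *)
Definition discr {R : nzRingType} (p : {poly R}) : R := resultant p p^`().

Lemma separable_discr (R : idomainType) (p : {poly R}) :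
  p \is monic -> separable_poly p = (discr p != 0).
Proof.
move=> mon_p; rewrite separable_poly.unlock resultant_eq0 coprimep_def -leqNgt.
have : size (gcdp p p^`()) != 0%N.
  by rewrite size_poly_eq0 gcdp_eq0 negb_and monic_neq0.
by case: (size _) => [|[|k]].
Qed.

Lemma sq_distinct_eigE (R : rcfType) n (A : 'M[R]_n) :
  sq_distinct_eig A <-> discr (char_poly (A *m A)) != 0.
Proof.
rewrite -separable_discr ?char_poly_monic // -(separable_map (real_complex R)).
by rewrite map_char_poly; symmetry; exact: separable_char_polyP.
Qed.

Lemma obs_condE (R : rcfType) n (b : 'cV[R]_n.+1) (A : 'M[R]_n.+1) :
  obs_cond b A <-> \det (krylov_mx A b) != 0.
Proof.
rewrite -(fmorph_eq0 (real_complex R)) -det_map_mx map_krylov_mx det_krylov_mx_neq0.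
split=> [obs eta eta0 l etaA | hautus eta [eta0 [l etaA]]].
  rewrite mxE; under eq_bigr do rewrite mulrC mxE.
  by apply: obs; split=> //; exists l.
have := hautus eta eta0 l etaA; rewrite mxE.
by under eq_bigr do rewrite mulrC mxE.
Qed.

Lemma exists_discr_char_poly_sqr_neq0 (R : numFieldType) n :
  exists A : 'M[R]_n, discr (char_poly (A *m A)) != 0.
Proof.
pose d : 'rV[R]_n := \row_i i.+1%:R.
exists (diag_mx d); rewrite -separable_discr ?char_poly_monic //.
rewrite mulmx_diag char_poly_trig ?diag_mx_is_trig //.
have -> : \prod_(i < n) ('X - (diag_mx (\row_j (d 0 j * d 0 j)) i i)%:P) =
          \prod_(x <- [seq (i.+1 ^ 2)%:R | i : 'I_n]) ('X - x%:P).
  by rewrite big_map big_enum; apply: eq_bigr => i _; rewrite !mxE eqxx mulr1n natrX.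
rewrite separable_prod_XsubC map_inj_uniq ?enum_uniq // => i j /eqP.
by rewrite eqr_nat eqn_exp2r // => /eqP [] /val_inj.
Qed.

Section RealMatrixPolymap.
Variables (R : realType) (n : nat).

Lemma polymap_discr_char_poly_sqr :
  polymap (fun A : 'M[R]_n.+1 => discr (char_poly (A *m A))).
Proof.
have chi : polymap_poly (fun A : 'M[R]_n.+1 => char_poly (A *m A)).
  by apply: polymap_char_poly; apply: polymap_mxM; exact: polymap_mx_id.
apply: (@polymap_resultant _ _ _ _ n.+1 n) => // [|A|A].
- exact: polymap_poly_deriv.
- by rewrite size_char_poly.
- by rewrite polyorder.size_deriv size_char_poly.
Qed.

Lemma polymap_det_krylov_mx (b : 'cV[R]_n.+1) :
  polymap (fun A : 'M[R]_n.+1 => \det (krylov_mx A b)).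
Proof.
apply: polymap_det => i j; under eq_fun do rewrite mxE.
by apply: polymap_mxM; [exact: polymap_mx_exp | exact: polymap_mx_cst].
Qed.

End RealMatrixPolymap.

Local Open Scope classical_set_scope.

Theorem lemma1 (R : realType) (n : nat) (b : 'cV[R]_n) (hb : b != 0) :
  open (good_set b : set 'M[R]_n) /\ dense (good_set b : set 'M[R]_n).
Proof.
case: n b hb => [|n] b hb; first by rewrite flatmx0 eqxx in hb.
have -> : good_set b = [set A : 'M[R]_n.+1 | \det A != 0] `&`
    ([set A | discr (char_poly (A *m A)) != 0] `&` [set A | \det (krylov_mx A b) != 0]).
  apply/seteqP; split=> A; rewrite /good_set /= unitmxE unitfE.
    by move=> [-> [/sq_distinct_eigE -> /obs_condE ->]].
  by move=> [-> [/sq_distinct_eigE ? /obs_condE ?]].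
have [open1 dense1] :
    open [set A : 'M[R]_n.+1 | \det A != 0] /\ dense [set A : 'M[R]_n.+1 | \det A != 0].
  apply: polymap_open_dense_neq0; first exact/polymap_det/polymap_mx_id.
  by exists 1; rewrite det1 oner_eq0.
have [open2 dense2] := polymap_open_dense_neq0 _ (polymap_discr_char_poly_sqr R n)
  (exists_discr_char_poly_sqr_neq0 R n.+1).
have [open3 dense3] := polymap_open_dense_neq0 _ (polymap_det_krylov_mx R n b)
  (exists_det_krylov_mx_neq0 hb).
split; first by apply: openI => //; exact: openI.
by apply: denseI => //; exact: denseI.
Qed.
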